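(* Let $F_n:[0,+\infty)\to\mathcal L(X,X)$, $n\ge1$, be continuous functions such that $\|F_n(t)\|_{\mathcal L(X,X)}\le R_F$ for all $t\ge0$, $n\ge1$ and some $R_F>0$, and such that for every $T>0$, $\int_0^tF_n(r)\,dr\to0$ in $\mathcal L(X,X)$ as $n\to+\infty$, uniformly with respect to $t\in[0,T]$. Then for every $T>0$, $$\lim_{n\to+\infty}\int_s^tF_n(r)S_0(r-s)\bar u\,dr=0\quad\text{in }X,$$ uniformly with respect to $\bar u$ in bounded subsets of $X$, $t\in[0,T]$ and $s\in[0,t]$.
   Context: $X$ is a Banach space. $A_0$ is a linear operator in $X$ such that $-A_0$ generates an analytic $C_0$-semigroup $\{S_0(t)\}_{t\ge0}$ on $X$ satisfying $\|S_0(t)\|_{\mathcal L(X,X)}\le M_0$ for $t\ge0$ and $\|A_0S_0(t)\|_{\mathcal L(X,X)}\le M_1t^{-1}$ for $t>0$, for some constants $M_0,M_1>0$. *)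

From Stdlib Require Import Reals.
From Coquelicot Require Import Coquelicot.
Open Scope R_scope.

Section Ops.
Context {X : CompleteNormedModule R_AbsRing}.

Definition is_linear_op (A : X -> X) : Prop :=
  (forall x y, A (plus x y) = plus (A x) (A y)) /\
  (forall (a : R) x, A (scal a x) = scal a (A x)).

Definition op_norm_le (A : X -> X) (c : R) : Prop :=
  forall x, norm (A x) <= c * norm x.

Definition is_bounded_op (A : X -> X) : Prop :=
  is_linear_op A /\ exists c, op_norm_le A c.

Definition C0_semigroup (S : R -> X -> X) : Prop :=
  (forall t, 0 <= t -> is_bounded_op (S t)) /\
  (forall x, S 0 x = x) /\
  (forall t s x, 0 <= t -> 0 <= s -> S (t + s) x = S t (S s x)) /\
  (forall x, filterlim (fun t => S t x) (at_right 0) (locally x)).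

Definition is_generator (S : R -> X -> X) (G : X -> X) (D : X -> Prop) : Prop :=
  (forall x, D x <-> exists y,
     filterlim (fun h => scal (/ h) (minus (S h x) x)) (at_right 0) (locally y)) /\
  (forall x, D x ->
     filterlim (fun h => scal (/ h) (minus (S h x) x)) (at_right 0) (locally (G x))).

Definition op_continuous_on_halfline (F : R -> X -> X) : Prop :=
  forall t, 0 <= t -> forall eps, 0 < eps -> exists delta, 0 < delta /\
    forall r, 0 <= r -> Rabs (r - t) < delta ->
      op_norm_le (fun x => minus (F r x) (F t x)) eps.

End Ops.

From Stdlib Require Import Reals Lra Lia Classical.
From Coquelicot Require Import Coquelicot.
Open Scope R_scope.

(* Split [s, t] at s + delta.  Near s the integrand is bounded by RF M0 rho, so that part
   is O(delta).  Beyond s + delta, analyticity (|A0 S0(tau)| <= M1 / tau) and a mean value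
   inequality make r |-> S0 (r - s) u Lipschitz with constant M1 rho / delta.  Cut
   [s + delta, t] into k pieces of length <= h and freeze the orbit at the left endpoint a
   of each piece: the integral of F_n(r) v over [a, b] is a difference of two integrals
   from 0, hence at most 2 eta |v| once |int_0^t F_n| <= eta on [0, T], and the freezing
   error is at most RF (M1 rho / delta) (b - a)^2.  Altogether
     RF M0 rho delta + 2 k eta M0 rho + RF (M1 rho / delta) h T,
   and choosing delta, then h (hence k), then eta (hence n) makes this small. *)

Lemma plus_minus_cancel {G : AbelianGroup} (x y : G) : plus y (minus x y) = x.
Proof.
  transitivity (plus (minus x y) (minus y zero)).
  - rewrite minus_zero_r. apply plus_comm.
  - rewrite <- minus_trans. apply minus_zero_r.
Qed.

Lemma exists_nat_mul_ge (h x : R) : 0 < h -> exists k : nat, x <= INR k * h.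
Proof.
  intro Hh. destruct (INR_unbounded (x / h)) as [k Hk]. exists k.
  apply Rlt_le. apply Rmult_lt_reg_r with (/ h); [now apply Rinv_0_lt_compat|].
  now rewrite Rmult_assoc, Rinv_r, Rmult_1_r by lra.
Qed.

Section NormedModuleFacts.
Context {X : CompleteNormedModule R_AbsRing}.

Definition continuous_within (f : R -> X) (a b : R) : Prop :=
  forall z, a <= z <= b -> forall e, 0 < e -> exists g, 0 < g /\
    forall r, a <= r <= b -> Rabs (r - z) < g -> norm (minus (f r) (f z)) < e.

Lemma norm_minus_triangle (a b c : X) :
  norm (minus a c) <= norm (minus a b) + norm (minus b c).
Proof. rewrite (minus_trans b). exact (norm_triangle _ _). Qed.

Lemma norm_minus_self (a : X) : norm (minus a a) = 0.
Proof. rewrite minus_eq_zero. exact norm_zero. Qed.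

Lemma norm_minus_sym (a b : X) : norm (minus a b) = norm (minus b a).
Proof. rewrite <- opp_minus. exact (norm_opp _). Qed.

Lemma norm_minus_le (a b : X) : norm (minus a b) <= norm a + norm b.
Proof. unfold minus. rewrite <- (norm_opp b). exact (norm_triangle _ _). Qed.

Lemma norm_le_minus_plus (a b : X) : norm a <= norm (minus a b) + norm b.
Proof.
  rewrite <- (minus_zero_r a) at 1. rewrite <- (minus_zero_r b) at 2.
  apply norm_minus_triangle.
Qed.

Lemma norm_le_mul_scal_inv (k : R) (x : X) : 0 < k -> norm x <= k * norm (scal (/ k) x).
Proof.
  intro Hk.
  replace x with (scal k (scal (/ k) x)) at 1.
  - pose proof (norm_scal k (scal (/ k) x)) as Hs.
    change (abs k) with (Rabs k) in Hs. now rewrite Rabs_pos_eq in Hs by lra.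
  - rewrite scal_assoc. change (mult k (/ k)) with (k * / k).
    rewrite Rinv_r by lra. exact (scal_one _).
Qed.

Lemma linear_op_opp (A : X -> X) : is_linear_op A -> forall x, A (opp x) = opp (A x).
Proof.
  intros [_ HA] x.
  transitivity (A (scal (opp (one : R_AbsRing)) x)).
  - f_equal. symmetry. exact (scal_opp_one x).
  - rewrite HA. exact (scal_opp_one (A x)).
Qed.

Lemma linear_op_minus (A : X -> X) :
  is_linear_op A -> forall x y, A (minus x y) = minus (A x) (A y).
Proof. intros HA x y. unfold minus. rewrite (proj1 HA). now rewrite linear_op_opp. Qed.

Lemma filterlim_at_right_0_norm (f : R -> X) (l : X) :
  filterlim f (at_right 0) (locally l) ->
  forall e, 0 < e -> exists g, 0 < g /\ forall h, 0 < h < g -> norm (minus (f h) l) < e.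
Proof.
  intros Hf e He.
  destruct (proj1 (filterlim_locally_ball_norm f l) Hf (mkposreal e He)) as [g Hg].
  exists g. split; [apply cond_pos|]. intros h Hh.
  apply (Hg h); [|lra]. change (Rabs (h - 0) < g).
  rewrite Rminus_0_r, Rabs_right; lra.
Qed.

Lemma ex_RInt_continuous_within (f : R -> X) (a b : R) :
  a <= b -> continuous_within f a b -> ex_RInt f a b.
Proof.
  intros Hab Hf.
  set (clamp := fun r => Rmax a (Rmin b r)).
  assert (Hclamp : forall r, a <= clamp r <= b).
  { intro r; unfold clamp; split; [apply Rmax_l|]. apply Rmax_lub; [lra|apply Rmin_l]. }
  assert (Hlip : forall r z, Rabs (clamp r - clamp z) <= Rabs (r - z)).
  { intros r z; unfold clamp, Rmax, Rmin.
    repeat destruct Rle_dec; unfold Rabs; repeat destruct Rcase_abs; lra. }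
  apply ex_RInt_ext with (f := fun r => f (clamp r)).
  { intros x Hx. rewrite Rmin_left, Rmax_right in Hx by lra.
    unfold clamp. now rewrite Rmin_right, Rmax_right by lra. }
  apply ex_RInt_continuous. intros z _.
  refine (proj2 (@filterlim_locally_ball_norm R_AbsRing R
    (CompleteNormedModule.NormedModule R_AbsRing X) _ _ _ _) _). intro eps.
  destruct (Hf (clamp z) (Hclamp z) eps (cond_pos eps)) as [g [Hg Hfg]].
  exists (mkposreal g Hg). intros y Hy.
  change (Rabs (y - z) < g) in Hy.
  apply Hfg; [apply Hclamp|]. specialize (Hlip y z). lra.
Qed.
End NormedModuleFacts.

Section MeanValueInequality.
Context {X : CompleteNormedModule R_AbsRing} (f : R -> X) (c d : R).
Hypothesis Hcd : c <= d.
Hypothesis Hf : continuous_within f c d.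

Lemma increment_bound_left_limit (K m : R) : 0 <= K -> c <= m <= d ->
  (forall h, c <= h < m -> norm (minus (f h) (f c)) <= K * (h - c)) ->
  norm (minus (f m) (f c)) <= K * (m - c).
Proof.
  intros HK Hm Hbelow.
  destruct (Req_dec m c) as [->|Hmc].
  { rewrite norm_minus_self. lra. }
  apply Rle_plus_epsilon. intros gam Hgam.
  destruct (Hf m Hm gam Hgam) as [g [Hg Hfg]].
  set (r := Rmax c (m - g / 2)).
  assert (Hr : c <= r < m /\ Rabs (r - m) < g).
  { unfold r, Rmax; destruct Rle_dec; split; try split;
      unfold Rabs; try destruct Rcase_abs; lra. }
  pose proof (Hfg r ltac:(lra) (proj2 Hr)) as Hmr. rewrite norm_minus_sym in Hmr.
  pose proof (norm_minus_triangle (f m) (f r) (f c)).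
  pose proof (Hbelow r (proj1 Hr)).
  assert (K * (r - c) <= K * (m - c)) by (apply Rmult_le_compat_l; lra).
  lra.
Qed.

Lemma increment_bound_of_right_slope (K : R) : 0 <= K ->
  (forall z, c <= z < d -> exists g, 0 < g /\
     forall k, 0 < k < g -> norm (minus (f (z + k)) (f z)) <= K * k) ->
  norm (minus (f d) (f c)) <= K * (d - c).
Proof.
  intros HK Hslope.
  set (bounded_upto := fun h => c <= h <= d /\ forall h', c <= h' <= h ->
         norm (minus (f h') (f c)) <= K * (h' - c)).
  assert (Hc : bounded_upto c).
  { split; [lra|]. intros h' Hh'. replace h' with c by lra.
    rewrite norm_minus_self. lra. }
  assert (Hub : bound bounded_upto) by (exists d; intros x [Hx _]; lra).
  destruct (completeness _ Hub (ex_intro _ c Hc)) as [m [Hm_ub Hm_lub]].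
  assert (Hm : c <= m <= d).
  { split; [now apply Hm_ub|]. apply Hm_lub. intros x [Hx _]; lra. }
  assert (Hbelow : forall h, c <= h < m -> norm (minus (f h) (f c)) <= K * (h - c)).
  { intros h Hh. apply NNPP. intro Hnot.
    assert (m <= h); [|lra].
    apply Hm_lub. intros x [Hx Hxb]. apply Rnot_lt_le. intro Hhx.
    apply Hnot, Hxb. lra. }
  assert (Hat_m : bounded_upto m).
  { split; [lra|]. intros h' Hh'.
    destruct (Rlt_or_le h' m); [apply Hbelow; lra|].
    replace h' with m by lra. apply increment_bound_left_limit; auto. }
  destruct (Rlt_or_le m d) as [Hmd|Hmd].
  2: { apply (proj2 Hat_m). lra. }
  exfalso.
  destruct (Hslope m ltac:(lra)) as [g [Hg Hfg]].
  set (k := Rmin (g / 2) (d - m)).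
  assert (Hk : 0 < k < g /\ k <= d - m)
    by (unfold k, Rmin; destruct Rle_dec; lra).
  assert (bounded_upto (m + k)).
  { split; [lra|]. intros h' Hh'.
    destruct (Rle_or_lt h' m); [apply (proj2 Hat_m); lra|].
    pose proof (Hfg (h' - m) ltac:(lra)) as Hstep.
    replace (m + (h' - m)) with h' in Hstep by ring.
    pose proof (norm_minus_triangle (f h') (f m) (f c)).
    pose proof (proj2 Hat_m m ltac:(lra)). nra. }
  assert (m + k <= m) by (now apply Hm_ub). lra.
Qed.

Lemma increment_bound_of_right_derivative (L : R) : 0 <= L ->
  (forall z, c <= z < d -> forall e, 0 < e -> exists g, 0 < g /\
     forall k, 0 < k < g -> norm (minus (f (z + k)) (f z)) <= (L + e) * k) ->
  norm (minus (f d) (f c)) <= L * (d - c).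
Proof.
  intros HL Hderiv.
  apply Rle_plus_epsilon. intros eps Heps.
  set (e := eps / (d - c + 1)).
  assert (He : 0 < e) by (unfold e; apply Rdiv_lt_0_compat; lra).
  assert (Hed : e * (d - c) = eps - e) by (unfold e; field; lra).
  assert (norm (minus (f d) (f c)) <= (L + e) * (d - c)).
  { apply increment_bound_of_right_slope; [lra|]. intros z Hz. now apply Hderiv. }
  nra.
Qed.
End MeanValueInequality.

Section BoundedSemigroup.
Context {X : CompleteNormedModule R_AbsRing} (S0 : R -> X -> X) (M0 : R).
Hypothesis HS0 : C0_semigroup S0.
Hypothesis HM0 : 0 < M0.
Hypothesis HS0bd : forall t, 0 <= t -> op_norm_le (S0 t) M0.

Lemma semigroup_increment_le (r h : R) (x : X) : 0 <= r -> 0 <= h ->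
  norm (minus (S0 (r + h) x) (S0 r x)) <= M0 * norm (minus (S0 h x) x).
Proof.
  intros Hr Hh. destruct HS0 as [Hlin [_ [Hmul _]]].
  rewrite Hmul, <- (linear_op_minus _ (proj1 (Hlin r Hr))) by lra.
  apply HS0bd; lra.
Qed.

Lemma C0_semigroup_continuous_within (x : X) (a b : R) :
  0 <= a -> continuous_within (fun r => S0 r x) a b.
Proof.
  intros Ha z Hz e He.
  destruct HS0 as [_ [H0 [_ Hright]]].
  destruct (filterlim_at_right_0_norm _ _ (Hright x) (e / M0))
    as [g [Hg Hfg]]; [apply Rdiv_lt_0_compat; lra|].
  assert (Hsmall : forall h, 0 <= h < g -> M0 * norm (minus (S0 h x) x) < e).
  { intros h Hh. destruct (Req_dec h 0) as [->|Hh0].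
    - rewrite H0, norm_minus_self. lra.
    - pose proof (Hfg h ltac:(lra)) as Hh_small.
      apply Rmult_lt_compat_l with (r := M0) in Hh_small; [|lra].
      replace (M0 * (e / M0)) with e in Hh_small by (field; lra). exact Hh_small. }
  exists g. split; [exact Hg|]. intros r Hr Hrz. simpl.
  destruct (Rle_or_lt r z).
  - rewrite norm_minus_sym. replace z with (r + (z - r)) by ring.
    eapply Rle_lt_trans; [apply semigroup_increment_le; lra|].
    apply Hsmall. rewrite Rabs_left1 in Hrz; lra.
  - replace r with (z + (r - z)) by ring.
    eapply Rle_lt_trans; [apply semigroup_increment_le; lra|].
    apply Hsmall. rewrite Rabs_right in Hrz; lra.
Qed.

Context (A0 : X -> X) (DA0 : X -> Prop) (M1 : R).
Hypothesis Hgen : is_generator S0 (fun x => opp (A0 x)) DA0.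
Hypothesis HM1 : 0 < M1.
Hypothesis HAS0 : forall t, 0 < t ->
  (forall x, DA0 (S0 t x)) /\ op_norm_le (fun x => A0 (S0 t x)) (M1 / t).

(* Away from 0 the orbit is Lipschitz: its right derivative -A0 S0(z) x has norm <= M1 / z. *)
Lemma analytic_semigroup_lipschitz (delta : R) (x : X) (c d : R) :
  0 < delta -> delta <= c -> c <= d ->
  norm (minus (S0 d x) (S0 c x)) <= M1 / delta * norm x * (d - c).
Proof.
  intros Hdelta Hc Hcd.
  assert (Hslope : 0 <= M1 / delta * norm x).
  { apply Rmult_le_pos; [apply Rlt_le, Rdiv_lt_0_compat; lra|apply norm_ge_0]. }
  apply (increment_bound_of_right_derivative (fun r => S0 r x)); [lra| |lra|].
  { apply C0_semigroup_continuous_within. lra. }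
  intros z Hz e He.
  set (y := S0 z x).
  destruct (HAS0 z ltac:(lra)) as [HD HA].
  destruct (filterlim_at_right_0_norm _ _ (proj2 Hgen y (HD x)) e He) as [g [Hg Hfg]].
  exists g. split; [exact Hg|]. intros k Hk.
  replace (S0 (z + k) x) with (S0 k y)
    by (unfold y; rewrite <- (proj1 (proj2 (proj2 HS0))) by lra; f_equal; ring).
  pose proof (norm_le_mul_scal_inv k (minus (S0 k y) y) ltac:(lra)) as Hscal.
  pose proof (norm_le_minus_plus (scal (/ k) (minus (S0 k y) y)) (opp (A0 y))) as Htri.
  assert (Hopp : norm (opp (A0 y)) = norm (A0 y)) by exact (norm_opp _).
  pose proof (Hfg k Hk) as Hquot.
  pose proof (HA x) as HAy. simpl in HAy. fold y in HAy.
  assert (M1 / z * norm x <= M1 / delta * norm x).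
  { apply Rmult_le_compat_r; [apply norm_ge_0|].
    apply Rmult_le_compat_l; [lra|]. apply Rinv_le_contravar; lra. }
  assert (Hq : norm (scal (/ k) (minus (S0 k y) y)) <= M1 / delta * norm x + e) by lra.
  eapply Rle_trans; [exact Hscal|].
  rewrite (Rmult_comm _ k). apply Rmult_le_compat_l; lra.
Qed.
End BoundedSemigroup.

Section OperatorFamily.
Context {X : CompleteNormedModule R_AbsRing} (F : R -> X -> X) (RF : R).
Hypothesis HRF : 0 <= RF.
Hypothesis HFlin : forall t, 0 <= t -> is_linear_op (F t).
Hypothesis HFcont : op_continuous_on_halfline F.
Hypothesis HFbd : forall t, 0 <= t -> op_norm_le (F t) RF.

Lemma ex_RInt_op_apply (w : R -> X) (a b B : R) : 0 <= a -> a <= b ->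
  (forall r, a <= r <= b -> norm (w r) <= B) -> continuous_within w a b ->
  ex_RInt (fun r => F r (w r)) a b.
Proof.
  intros Ha Hab Hwb Hw.
  assert (HB : 0 <= B)
    by (apply Rle_trans with (norm (w a)); [apply norm_ge_0|apply Hwb; lra]).
  apply ex_RInt_continuous_within; [exact Hab|]. intros z Hz e He.
  set (e1 := e / (2 * (B + 1))). set (e2 := e / (2 * (RF + 1))).
  assert (He1 : 0 < e1 /\ e1 * (B + 1) = e / 2)
    by (unfold e1; split; [apply Rdiv_lt_0_compat|field]; lra).
  assert (He2 : 0 < e2 /\ e2 * (RF + 1) = e / 2)
    by (unfold e2; split; [apply Rdiv_lt_0_compat|field]; lra).
  destruct (HFcont z ltac:(lra) e1 (proj1 He1)) as [g1 [Hg1 HFg]].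
  destruct (Hw z Hz e2 (proj1 He2)) as [g2 [Hg2 Hwg]].
  exists (Rmin g1 g2). split; [now apply Rmin_glb_lt|]. intros r Hr Hrz.
  pose proof (Rmin_l g1 g2). pose proof (Rmin_r g1 g2).
  pose proof (norm_minus_triangle (F r (w r)) (F z (w r)) (F z (w z))) as Htri.
  rewrite <- (linear_op_minus _ (HFlin z ltac:(lra))) in Htri.
  pose proof (HFg r ltac:(lra) ltac:(lra) (w r)) as Hop. simpl in Hop.
  pose proof (HFbd z ltac:(lra) (minus (w r) (w z))) as Hfix.
  pose proof (Hwg r Hr ltac:(lra)) as Hwr.
  pose proof (Hwb r Hr).
  assert (e1 * norm (w r) <= e1 * B) by (apply Rmult_le_compat_l; lra).
  assert (RF * norm (minus (w r) (w z)) <= RF * e2) by (apply Rmult_le_compat_l; lra).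
  nra.
Qed.

Lemma norm_RInt_op_const_le (T eta : R) (v : X) (a b : R) :
  (forall t, 0 <= t <= T -> op_norm_le (fun x => RInt (fun r => F r x) 0 t) eta) ->
  0 <= a -> a <= b -> b <= T ->
  norm (RInt (fun r => F r v) a b) <= 2 * eta * norm v.
Proof.
  intros Heta Ha Hab HbT.
  assert (Hex : forall c, 0 <= c -> ex_RInt (fun r => F r v) 0 c).
  { intros c Hc. apply (ex_RInt_op_apply (fun _ => v) 0 c (norm v)); try lra.
    { intros; lra. }
    intros z _ e He. exists 1. split; [lra|]. intros. rewrite norm_minus_self. lra. }
  replace (RInt (fun r => F r v) a b)
    with (minus (RInt (fun r => F r v) 0 b) (RInt (fun r => F r v) 0 a)).
  2: { rewrite <- (RInt_Chasles _ 0 a b); [|apply Hex; lra|].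
    - unfold minus. rewrite plus_comm, plus_assoc, plus_opp_l, plus_zero_l. reflexivity.
    - apply (ex_RInt_Chasles_2 _ 0); [lra|]. apply Hex. lra. }
  eapply Rle_trans; [apply norm_minus_le|].
  pose proof (Heta b ltac:(lra) v). pose proof (Heta a ltac:(lra) v). simpl in *. lra.
Qed.
End OperatorFamily.

Section OrbitIntegral.
Context {X : CompleteNormedModule R_AbsRing} (A0 : X -> X) (DA0 : X -> Prop)
  (S0 : R -> X -> X) (M0 M1 : R).
Hypothesis HS0 : C0_semigroup S0.
Hypothesis Hgen : is_generator S0 (fun x => opp (A0 x)) DA0.
Hypothesis HM0 : 0 < M0.
Hypothesis HM1 : 0 < M1.
Hypothesis HS0bd : forall t, 0 <= t -> op_norm_le (S0 t) M0.
Hypothesis HAS0 : forall t, 0 < t ->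
  (forall x, DA0 (S0 t x)) /\ op_norm_le (fun x => A0 (S0 t x)) (M1 / t).

Context (F : R -> X -> X) (RF : R).
Hypothesis HRF : 0 <= RF.
Hypothesis HFlin : forall t, 0 <= t -> is_linear_op (F t).
Hypothesis HFcont : op_continuous_on_halfline F.
Hypothesis HFbd : forall t, 0 <= t -> op_norm_le (F t) RF.

Context (T eta : R).
Hypothesis Heta_nonneg : 0 <= eta.
Hypothesis Heta :
  forall t, 0 <= t <= T -> op_norm_le (fun x => RInt (fun r => F r x) 0 t) eta.

Context (u : X) (rho s : R).
Hypothesis Hu : norm u <= rho.
Hypothesis Hs : 0 <= s.

Lemma ex_RInt_orbit (a b : R) : s <= a -> a <= b ->
  ex_RInt (fun r => F r (S0 (r - s) u)) a b.
Proof.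
  intros Ha Hab.
  apply (ex_RInt_op_apply F RF HRF HFlin HFcont HFbd _ a b (M0 * norm u)); try lra.
  - intros r Hr. apply HS0bd. lra.
  - intros z Hz e He.
    destruct (C0_semigroup_continuous_within S0 M0 HS0 HM0 HS0bd u (a - s) (b - s)
                ltac:(lra) (z - s) ltac:(lra) e He) as [g [Hg Hcont]].
    exists g. split; [exact Hg|]. intros r Hr Hrz.
    apply Hcont; [lra|]. now replace (r - s - (z - s)) with (r - z) by ring.
Qed.

Lemma norm_RInt_orbit_piece_le (delta a b : R) :
  0 < delta -> s + delta <= a -> a <= b -> b <= T ->
  norm (RInt (fun r => F r (S0 (r - s) u)) a b) <=
    2 * eta * (M0 * rho) + RF * (M1 / delta * rho) * (b - a) * (b - a).
Proof.
  intros Hdelta Ha Hab HbT.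
  set (v := S0 (a - s) u).
  set (frozen_error := fun r => minus (F r (S0 (r - s) u)) (F r v)).
  assert (Hv : norm v <= M0 * rho).
  { eapply Rle_trans; [apply HS0bd; lra|]. apply Rmult_le_compat_l; lra. }
  assert (Hex_v : ex_RInt (fun r => F r v) a b).
  { apply (ex_RInt_op_apply F RF HRF HFlin HFcont HFbd _ a b (norm v)); try lra.
    - intros; lra.
    - intros z _ e He. exists 1. split; [lra|]. intros. rewrite norm_minus_self. lra. }
  assert (Hex_err : ex_RInt frozen_error a b)
    by (apply (ex_RInt_minus (V := X)); [apply ex_RInt_orbit|]; auto; lra).
  replace (RInt (fun r => F r (S0 (r - s) u)) a b)
    with (plus (RInt (fun r => F r v) a b) (RInt frozen_error a b)).
  2: { rewrite <- (RInt_plus (V := X) _ _ a b Hex_v Hex_err). apply RInt_ext. intros r _.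
       exact (plus_minus_cancel _ _). }
  eapply Rle_trans; [exact (norm_triangle _ _)|]. apply Rplus_le_compat.
  - eapply Rle_trans; [apply (norm_RInt_op_const_le F RF HRF HFlin HFcont HFbd T);
      auto; lra|].
    pose proof (Rle_trans _ _ _ (norm_ge_0 u) Hu).
    apply Rmult_le_compat_l; lra.
  - rewrite Rmult_comm.
    apply (norm_RInt_le_const frozen_error); [lra| |apply RInt_correct, Hex_err].
    intros r Hr. unfold frozen_error, v.
    rewrite <- (linear_op_minus _ (HFlin r ltac:(lra))).
    eapply Rle_trans; [apply HFbd; lra|].
    rewrite Rmult_assoc. apply Rmult_le_compat_l; [lra|].
    eapply Rle_trans.
    { apply (analytic_semigroup_lipschitz S0 M0 HS0 HM0 HS0bd A0 DA0 M1 Hgen HM1 HAS0 delta);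
        lra. }
    replace (r - s - (a - s)) with (r - a) by ring.
    assert (0 <= M1 / delta) by (apply Rlt_le, Rdiv_lt_0_compat; lra).
    apply Rmult_le_compat; try lra.
    + apply Rmult_le_pos; [lra|apply norm_ge_0].
    + now apply Rmult_le_compat_l.
Qed.

Lemma norm_RInt_orbit_pieces_le (delta h : R) (k : nat) : 0 < delta -> 0 < h ->
  forall a b, s + delta <= a -> a <= b -> b <= T -> b - a <= INR k * h ->
  norm (RInt (fun r => F r (S0 (r - s) u)) a b) <=
    INR k * (2 * eta * (M0 * rho)) + RF * (M1 / delta * rho) * h * (b - a).
Proof.
  intros Hdelta Hh.
  assert (Hrho : 0 <= rho) by exact (Rle_trans _ _ _ (norm_ge_0 u) Hu).
  assert (Hpiece : 0 <= 2 * eta * (M0 * rho)) by (apply Rmult_le_pos; nra).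
  assert (Hlip : 0 <= RF * (M1 / delta * rho)).
  { apply Rmult_le_pos; [lra|]. apply Rmult_le_pos; [|lra].
    apply Rlt_le, Rdiv_lt_0_compat; lra. }
  induction k as [|k IH]; intros a b Ha Hab HbT Hk.
  - simpl in Hk. replace b with a by lra.
    apply Rle_trans with 0; [right; rewrite RInt_point; exact norm_zero|]. simpl. lra.
  - rewrite S_INR in Hk |- *. pose proof (pos_INR k).
    destruct (Rle_or_lt (b - a) h) as [Hshort|Hlong].
    + pose proof (norm_RInt_orbit_piece_le delta a b Hdelta Ha Hab HbT).
      assert (RF * (M1 / delta * rho) * (b - a) * (b - a)
                <= RF * (M1 / delta * rho) * h * (b - a)) by
        (apply Rmult_le_compat_r; [|apply Rmult_le_compat_l]; lra).
      nra.
    + rewrite <- (RInt_Chasles _ a (a + h) b) by (apply ex_RInt_orbit; lra).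
      eapply Rle_trans; [exact (norm_triangle _ _)|].
      pose proof (norm_RInt_orbit_piece_le delta a (a + h) Hdelta Ha ltac:(lra) ltac:(lra)).
      pose proof (IH (a + h) b ltac:(lra) ltac:(lra) HbT ltac:(lra)).
      replace (a + h - a) with h in * by ring.
      nra.
Qed.

Lemma norm_RInt_orbit_le (delta h : R) (k : nat) (t : R) :
  0 < delta -> 0 < h -> T <= INR k * h -> s <= t <= T ->
  norm (RInt (fun r => F r (S0 (r - s) u)) s t) <=
    RF * (M0 * rho) * delta + INR k * (2 * eta * (M0 * rho))
    + RF * (M1 / delta * rho) * h * T.
Proof.
  intros Hdelta Hh Hk Ht.
  assert (Hrho : 0 <= rho) by exact (Rle_trans _ _ _ (norm_ge_0 u) Hu).
  assert (Hlip : 0 <= RF * (M1 / delta * rho)).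
  { apply Rmult_le_pos; [lra|]. apply Rmult_le_pos; [|lra].
    apply Rlt_le, Rdiv_lt_0_compat; lra. }
  pose proof (pos_INR k).
  assert (Hpieces : 0 <= INR k * (2 * eta * (M0 * rho)))
    by (repeat apply Rmult_le_pos; lra).
  assert (Hinit : forall b, s <= b <= s + delta ->
            norm (RInt (fun r => F r (S0 (r - s) u)) s b) <= RF * (M0 * rho) * delta).
  { intros b Hb. eapply Rle_trans.
    { apply (norm_RInt_le_const (fun r => F r (S0 (r - s) u)) s b);
        [lra| |apply RInt_correct, ex_RInt_orbit; lra].
      intros r Hr. eapply Rle_trans; [apply HFbd; lra|].
      apply Rmult_le_compat_l; [lra|]. eapply Rle_trans; [apply HS0bd; lra|].
      apply Rmult_le_compat_l; [lra|exact Hu]. }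
    assert (0 <= RF * (M0 * rho)) by (repeat apply Rmult_le_pos; lra).
    nra. }
  destruct (Rle_or_lt t (s + delta)) as [Hshort|Hlong].
  { pose proof (Hinit t ltac:(lra)).
    assert (0 <= RF * (M1 / delta * rho) * h * T)
      by (apply Rmult_le_pos; [apply Rmult_le_pos|]; lra).
    lra. }
  rewrite <- (RInt_Chasles _ s (s + delta) t) by (apply ex_RInt_orbit; lra).
  eapply Rle_trans; [exact (norm_triangle _ _)|].
  pose proof (Hinit (s + delta) ltac:(lra)).
  pose proof (norm_RInt_orbit_pieces_le delta h k Hdelta Hh (s + delta) t
                ltac:(lra) ltac:(lra) ltac:(lra) ltac:(lra)).
  assert (RF * (M1 / delta * rho) * h * (t - (s + delta))
            <= RF * (M1 / delta * rho) * h * T)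
    by (apply Rmult_le_compat_l; [apply Rmult_le_pos|]; lra).
  lra.
Qed.
End OrbitIntegral.

Theorem lemma3p3
  (X : CompleteNormedModule R_AbsRing)
  (A0 : X -> X) (DA0 : X -> Prop) (S0 : R -> X -> X) (M0 M1 : R)
  (* -A0 generates the (bounded analytic) C_0-semigroup S0 *)
  (HS0 : C0_semigroup S0)
  (Hgen : is_generator S0 (fun x => opp (A0 x)) DA0)
  (HM0 : 0 < M0) (HM1 : 0 < M1)
  (HS0bd : forall t, 0 <= t -> op_norm_le (S0 t) M0)
  (HAS0 : forall t, 0 < t ->
     (forall x, DA0 (S0 t x)) /\ op_norm_le (fun x => A0 (S0 t x)) (M1 / t))
  (* the sequence F_n *)
  (F : nat -> R -> X -> X) (RF : R)
  (HRF : 0 < RF)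
  (HFlin : forall n t, (1 <= n)%nat -> 0 <= t -> is_linear_op (F n t))
  (HFcont : forall n, (1 <= n)%nat -> op_continuous_on_halfline (F n))
  (HFbd : forall n t, (1 <= n)%nat -> 0 <= t -> op_norm_le (F n t) RF)
  (HFint : forall T, 0 < T -> forall eps, 0 < eps -> exists N, forall n,
     (N <= n)%nat -> forall t, 0 <= t <= T ->
       op_norm_le (fun x => RInt (fun r => F n r x) 0 t) eps) :
  forall T, 0 < T -> forall rho, 0 < rho -> forall eps, 0 < eps ->
    exists N, forall n, (N <= n)%nat ->
      forall (u : X), norm u <= rho ->
      forall t s, 0 <= t <= T -> 0 <= s <= t ->
        norm (RInt (fun r => F n r (S0 (r - s) u)) s t) <= eps.
Proof.
  intros T HT rho Hrho eps Heps.
  assert (HM0rho : 0 < RF * (M0 * rho)) by (repeat apply Rmult_lt_0_compat; lra).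
  set (delta := eps / (3 * (RF * (M0 * rho)))).
  assert (Hdelta : 0 < delta /\ RF * (M0 * rho) * delta = eps / 3)
    by (unfold delta; split; [apply Rdiv_lt_0_compat|field]; lra).
  set (Lip := RF * (M1 / delta * rho)).
  assert (HLip : 0 <= Lip).
  { apply Rmult_le_pos; [lra|]. apply Rmult_le_pos; [|lra].
    apply Rlt_le, Rdiv_lt_0_compat; lra. }
  set (h := eps / (3 * (Lip * T + 1))).
  assert (Hh : 0 < h /\ h * (Lip * T + 1) = eps / 3)
    by (unfold h; split; [apply Rdiv_lt_0_compat|field]; nra).
  destruct (exists_nat_mul_ge h T (proj1 Hh)) as [k HkT].
  set (Q := INR k * (2 * (M0 * rho))).
  assert (HQ : 0 <= Q) by (pose proof (pos_INR k); unfold Q; nra).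
  set (eta := eps / (3 * (Q + 1))).
  assert (Heta : 0 < eta /\ eta * (Q + 1) = eps / 3)
    by (unfold eta; split; [apply Rdiv_lt_0_compat|field]; lra).
  destruct (HFint T HT eta (proj1 Heta)) as [N HN].
  exists (Nat.max N 1). intros n Hn u Hu t s Ht Hs.
  assert (Hn1 : (1 <= n)%nat) by lia.
  eapply Rle_trans.
  { apply (norm_RInt_orbit_le A0 DA0 S0 M0 M1 HS0 Hgen HM0 HM1 HS0bd HAS0
             (F n) RF ltac:(lra) (fun r => HFlin n r Hn1) (HFcont n Hn1) (fun r => HFbd n r Hn1)
             T eta ltac:(lra) (HN n ltac:(lia)) u rho s Hu ltac:(lra) delta h k t);
      lra. }
  assert (INR k * (2 * eta * (M0 * rho)) <= eps / 3).
  { rewrite <- (proj2 Heta). unfold Q. pose proof (pos_INR k). nra. }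
  assert (Lip * h * T <= eps / 3) by nra.
  fold Lip. lra.
Qed.
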